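(* Let $B\colon\mathbf{Set}\to\mathbf{Set}$ be a functor, $\Lambda$ a set and $(\tau_\lambda\colon B\mathbb{R}\to\mathbb{R})_{\lambda\in\Lambda}$ functions such that, for every set $Y$: (1) if $k\colon Y\to\mathbb{R}$ is bounded then $\tau_\lambda\circ Bk$ is bounded; (2) if $k_i\colon Y\to\mathbb{R}$ converges uniformly to $h$ then $\tau_\lambda\circ Bk_i$ converges uniformly to $\tau_\lambda\circ Bh$, for each $\lambda$. Then for every coalgebra $x\colon X\to BX$, the bisimulation uniformity of $x$ coincides with the logical uniformity of $x$, i.e. it is the coarsest uniformity on $X$ making every $[\![\varphi]\!]_x\colon X\to\mathbb{R}$ uniformly continuous.
   Context: For a family $F$ of functions $Y\to\mathbb{R}$, $\mathscr{U}(F)$ is the coarsest uniformity on $Y$ making each $f\in F$ uniformly continuous into $(\mathbb{R},\mathscr{U}_e)$, $\mathscr{U}_e$ the Euclidean uniformity. Formulas: $\varphi::=1\mid\min(\varphi_1,\varphi_2)\mid r+\varphi\mid r\times\varphi\ (r\in\mathbb{R})\mid\heartsuit_\lambda\varphi$; semantics $[\![1]\!]=1$, $\min$ pointwise, $[\![r+\varphi]\!]=r+[\![\varphi]\!]$, $[\![r\times\varphi]\!]=r[\![\varphi]\!]$, $[\![\heartsuit_\lambda\varphi]\!]_x=\tau_\lambda\circ B[\![\varphi]\!]_x\circ x$. Logical uniformity: $\mathscr{U}(\{[\![\varphi]\!]_x\})$. For a uniformity $\mathscr{U}$ on $X$, $\Phi(\mathscr{U})=\mathscr{U}(\{\tau_\lambda\circ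 Bh\circ x\mid\lambda,\ h\colon(X,\mathscr{U})\to(\mathbb{R},\mathscr{U}_e)$ uniformly continuous$\})$; uniformities are ordered by $\mathscr{U}\sqsubseteq\mathscr{V}$ iff $\mathscr{U}\supseteq\mathscr{V}$, and the bisimulation uniformity is the $\sqsubseteq$-greatest fixed point of $\Phi$. *)

From Stdlib Require Import Reals.
Open Scope R_scope.

Definition is_uniformity {X : Type} (U : (X * X -> Prop) -> Prop) : Prop :=
  U (fun _ => True) /\
  (forall E F : X * X -> Prop, U E -> (forall p, E p -> F p) -> U F) /\
  (forall E F : X * X -> Prop, U E -> U F -> U (fun p => E p /\ F p)) /\
  (forall E, U E -> forall a : X, E (a, a)) /\
  (forall E, U E -> U (fun p => E (snd p, fst p))) /\
  (forall E, U E -> exists F, U F /\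
      forall a b c : X, F (a, b) -> F (b, c) -> E (a, c)).

Definition euclid_unif (E : R * R -> Prop) : Prop :=
  exists e, 0 < e /\ forall a b : R, Rabs (a - b) < e -> E (a, b).

Definition unif_cont {X : Type} (U : (X * X -> Prop) -> Prop) (f : X -> R) : Prop :=
  forall E, euclid_unif E -> U (fun p => E (f (fst p), f (snd p))).

(** U(F): the coarsest uniformity on X making each f in F uniformly continuous,
    i.e. the intersection of all uniformities making every f in F uniformly
    continuous (the initial uniformity). *)
Definition unif_gen {X : Type} (F : (X -> R) -> Prop) (E : X * X -> Prop) : Prop :=
  forall U, is_uniformity U -> (forall f, F f -> unif_cont U f) -> U E.

(** Extensional equality of uniformities and the order U ⊑ V iff U ⊇ V. *)
Definition unif_eq {X : Type} (U V : (X * X -> Prop) -> Prop) : Prop :=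
  forall E, U E <-> V E.
Definition unif_sqle {X : Type} (U V : (X * X -> Prop) -> Prop) : Prop :=
  forall E, V E -> U E.

Inductive formula (Lam : Type) : Type :=
| FOne : formula Lam
| FMin : formula Lam -> formula Lam -> formula Lam
| FAdd : R -> formula Lam -> formula Lam
| FMul : R -> formula Lam -> formula Lam
| FHeart : Lam -> formula Lam -> formula Lam.
Arguments FOne {Lam}.
Arguments FMin {Lam} _ _.
Arguments FAdd {Lam} _ _.
Arguments FMul {Lam} _ _.
Arguments FHeart {Lam} _ _.

Section Semantics.
Variables (B : Type -> Type) (fmap : forall X Y : Type, (X -> Y) -> B X -> B Y).
Variables (Lam : Type) (tau : Lam -> B R -> R).
Variables (X : Type) (x : X -> B X).

Fixpoint sem (phi : formula Lam) : X -> R :=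
  match phi with
  | FOne => fun _ => 1
  | FMin p q => fun s => Rmin (sem p s) (sem q s)
  | FAdd r p => fun s => r + sem p s
  | FMul r p => fun s => r * sem p s
  | FHeart l p => fun s => tau l (fmap X R (sem p) (x s))
  end.

Definition logical_unif : (X * X -> Prop) -> Prop :=
  unif_gen (fun f => exists phi, f = sem phi).

Definition Phi (U : (X * X -> Prop) -> Prop) : (X * X -> Prop) -> Prop :=
  unif_gen (fun f => exists (l : Lam) (h : X -> R),
                unif_cont U h /\ f = (fun s => tau l (fmap X R h (x s)))).

Definition is_bisim_unif (U : (X * X -> Prop) -> Prop) : Prop :=
  is_uniformity U /\ unif_eq (Phi U) U /\
  (forall V, is_uniformity V -> unif_eq (Phi V) V -> unif_sqle V U).
End Semantics.

Definition bounded_fun {Y : Type} (k : Y -> R) : Prop :=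
  exists M, forall y, Rabs (k y) <= M.

Definition unif_conv {Y : Type} (k : nat -> Y -> R) (h : Y -> R) : Prop :=
  forall e, 0 < e -> exists N, forall n, (N <= n)%nat -> forall y, Rabs (k n y - h y) < e.

From Stdlib Require Import Reals Lra Lia List.
From Stdlib Require Import FunctionalExtensionality PropExtensionality IndefiniteDescription Classical.
Open Scope R_scope.
Import ListNotations.

(* The logical uniformity [L] is generated by the bounded functions [[phi]], so it has a base of
   balls of finitely many of them; such a pseudometric is totally bounded.  A function that is
   uniformly continuous for [L] is therefore bounded and Lipschitz up to an arbitrary error, and
   an inf-convolution over a finite net writes it as a uniform limit of min-max-affine
   combinations of the [[phi]], i.e. of semantics of formulas.  Condition (2) on [tau] then
   makes every generator [tau_l o B h o x] of [Phi L] uniformly continuous for [L], so [L] is a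
   fixed point of [Phi]; conversely every [[phi]] is uniformly continuous for every fixed point,
   by induction on [phi]. *)

Ltac minmax_lra :=
  unfold Rabs, Rmin, Rmax in *;
  repeat match goal with
  | |- context [Rcase_abs ?t] => destruct (Rcase_abs t)
  | H : context [Rcase_abs ?t] |- _ => destruct (Rcase_abs t)
  | |- context [Rle_dec ?s ?t] => destruct (Rle_dec s t)
  | H : context [Rle_dec ?s ?t] |- _ => destruct (Rle_dec s t)
  end; lra.

Lemma unif_eq_eq {X : Type} (U V : (X * X -> Prop) -> Prop) : unif_eq U V -> U = V.
Proof.
  intros HUV. extensionality E. apply propositional_extensionality, HUV.
Qed.

Section UniformContinuity.
Context {X : Type} (U : (X * X -> Prop) -> Prop).
Hypothesis HU : is_uniformity U.

Lemma unif_top : U (fun _ => True).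
Proof. apply HU. Qed.

Lemma unif_superset (E E' : X * X -> Prop) : U E -> (forall p, E p -> E' p) -> U E'.
Proof. apply HU. Qed.

Lemma unif_inter (E E' : X * X -> Prop) : U E -> U E' -> U (fun p => E p /\ E' p).
Proof. apply HU. Qed.

Lemma unif_contP (f : X -> R) :
  unif_cont U f <-> forall e, 0 < e -> U (fun p => Rabs (f (fst p) - f (snd p)) < e).
Proof.
  split.
  - intros Hf e He. apply (Hf (fun q => Rabs (fst q - snd q) < e)). exists e. auto.
  - intros Hf E [e [He HE]]. apply (unif_superset _ _ (Hf e He)). intros p. apply HE.
Qed.

Lemma unif_cont_const (c : R) : unif_cont U (fun _ => c).
Proof.
  apply unif_contP. intros e He. apply (unif_superset _ _ unif_top). intros p _.
  cbn. rewrite Rminus_diag, Rabs_R0. exact He.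
Qed.

Lemma unif_cont_addl (r : R) (f : X -> R) : unif_cont U f -> unif_cont U (fun s => r + f s).
Proof.
  intros Hf. apply unif_contP. intros e He.
  apply (unif_superset _ _ (proj1 (unif_contP f) Hf e He)). intros p. cbn.
  replace (r + f (fst p) - (r + f (snd p))) with (f (fst p) - f (snd p)) by ring. auto.
Qed.

Lemma unif_cont_scale (r : R) (f : X -> R) : unif_cont U f -> unif_cont U (fun s => r * f s).
Proof.
  intros Hf. apply unif_contP. intros e He.
  assert (Hr : 0 < Rabs r + 1) by (pose proof (Rabs_pos r); lra).
  apply (unif_superset _ _ (proj1 (unif_contP f) Hf (e / (Rabs r + 1))
           (Rdiv_lt_0_compat _ _ He Hr))).
  intros p Hp. cbn in *.
  rewrite <- Rmult_minus_distr_l, Rabs_mult.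
  assert (Ht : 0 <= Rabs (f (fst p) - f (snd p))) by apply Rabs_pos.
  assert (Rabs (f (fst p) - f (snd p)) * (Rabs r + 1) < e).
  { replace e with (e / (Rabs r + 1) * (Rabs r + 1)) by (field; lra).
    apply Rmult_lt_compat_r; lra. }
  nra.
Qed.

Lemma unif_cont_min (f g : X -> R) :
  unif_cont U f -> unif_cont U g -> unif_cont U (fun s => Rmin (f s) (g s)).
Proof.
  intros Hf Hg. apply unif_contP. intros e He.
  apply (unif_superset _ _ (unif_inter _ _ (proj1 (unif_contP f) Hf e He)
                                           (proj1 (unif_contP g) Hg e He))).
  intros p. cbn. generalize (f (fst p)) (f (snd p)) (g (fst p)) (g (snd p)). intros.
  minmax_lra.
Qed.

Lemma unif_cont_unif_limit (k : nat -> X -> R) (h : X -> R) :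
  (forall n, unif_cont U (k n)) -> unif_conv k h -> unif_cont U h.
Proof.
  intros Hk Hkh. apply unif_contP. intros e He.
  destruct (Hkh (e / 3)) as [N HN]; [lra|].
  apply (unif_superset _ _ (proj1 (unif_contP (k N)) (Hk N) (e / 3) ltac:(lra))).
  intros [a b]. cbn. pose proof (HN N (le_n N) a). pose proof (HN N (le_n N) b).
  revert H H0. generalize (k N a) (k N b) (h a) (h b). intros. minmax_lra.
Qed.

End UniformContinuity.

Lemma unif_conv_comp {Y Z : Type} (k : nat -> Z -> R) (h : Z -> R) (g : Y -> Z) :
  unif_conv k h -> unif_conv (fun i y => k i (g y)) (fun y => h (g y)).
Proof.
  intros Hkh e He. destruct (Hkh e He) as [N HN]. exists N. intros n Hn y. apply HN, Hn.
Qed.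

Lemma unif_conv_approx_seq {Y : Type} (P : (Y -> R) -> Prop) (h : Y -> R) :
  (forall e, 0 < e -> exists g, P g /\ forall y, Rabs (g y - h y) < e) ->
  exists k : nat -> Y -> R, (forall n, P (k n)) /\ unif_conv k h.
Proof.
  intros Happ.
  destruct (functional_choice
              (fun n g => P g /\ forall y, Rabs (g y - h y) < / INR (S n))) as [k Hk].
  { intros n. apply Happ, Rinv_0_lt_compat, lt_0_INR. lia. }
  exists k. split; [intros n; apply Hk|].
  intros e He. destruct (archimed_cor1 e He) as [N [HN HN0]].
  exists N. intros n Hn y. apply Rlt_trans with (/ INR (S n)); [apply Hk|].
  apply Rle_lt_trans with (/ INR N); [|exact HN].
  apply Rinv_le_contravar; [apply lt_0_INR; exact HN0| apply le_INR; lia].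
Qed.

Section Pseudometric.
Context {X : Type}.

Definition pdist (fs : list (X -> R)) (a b : X) : R :=
  fold_right (fun f m => Rmax (Rabs (f a - f b)) m) 0 fs.

Lemma pdist_ge0 fs a b : 0 <= pdist fs a b.
Proof.
  induction fs as [|f fs IH]; simpl; [lra|]. eapply Rle_trans; [exact IH| apply Rmax_r].
Qed.

Lemma pdist_refl fs a : pdist fs a a = 0.
Proof.
  induction fs as [|f fs IH]; simpl; [reflexivity|].
  rewrite IH, Rminus_diag, Rabs_R0. apply Rmax_left. lra.
Qed.

Lemma pdist_sym fs a b : pdist fs a b = pdist fs b a.
Proof.
  induction fs as [|f fs IH]; simpl; [reflexivity|]. rewrite IH, Rabs_minus_sym. reflexivity.
Qed.

Lemma pdist_triangle fs a b c : pdist fs a c <= pdist fs a b + pdist fs b c.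
Proof.
  induction fs as [|f fs IH]; simpl; [lra|]. apply Rmax_lub.
  - replace (f a - f c) with ((f a - f b) + (f b - f c)) by ring.
    eapply Rle_trans; [apply Rabs_triang|]. apply Rplus_le_compat; apply Rmax_l.
  - eapply Rle_trans; [exact IH|]. apply Rplus_le_compat; apply Rmax_r.
Qed.

Lemma pdist_app fs gs a b : pdist (fs ++ gs) a b = Rmax (pdist fs a b) (pdist gs a b).
Proof.
  induction fs as [|f fs IH]; simpl.
  - rewrite Rmax_right; [reflexivity| apply pdist_ge0].
  - rewrite IH. apply Rmax_assoc.
Qed.

Definition has_pdist_net (fs : list (X -> R)) (eta : R) (S : X -> Prop) : Prop :=
  exists bs, Forall S bs /\ forall a, S a -> exists b, In b bs /\ pdist fs a b < eta.

Lemma has_pdist_net_nil eta S : 0 < eta -> has_pdist_net [] eta S.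
Proof.
  intros Heta. destruct (classic (exists a, S a)) as [[a0 Ha0]|Hempty].
  - exists [a0]. split; [constructor; auto|]. intros a _. exists a0. split; [left; auto| exact Heta].
  - exists []. split; [constructor|]. intros a Ha. exfalso. eauto.
Qed.

Lemma has_pdist_net_cons f fs eta S :
  (forall a b, S a -> S b -> Rabs (f a - f b) < eta) ->
  has_pdist_net fs eta S -> has_pdist_net (f :: fs) eta S.
Proof.
  intros Hf [bs [Hbs Hnet]]. exists bs. split; [exact Hbs|]. intros a Ha.
  destruct (Hnet a Ha) as [b [Hb Hab]]. exists b. split; [exact Hb|].
  apply Rmax_lub_lt; [|exact Hab]. apply Hf; [exact Ha|]. exact (proj1 (Forall_forall _ _) Hbs b Hb).
Qed.

Lemma has_pdist_net_union fs eta (S S1 S2 : X -> Prop) :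
  (forall a, S a <-> S1 a \/ S2 a) ->
  has_pdist_net fs eta S1 -> has_pdist_net fs eta S2 -> has_pdist_net fs eta S.
Proof.
  intros HS [bs1 [Hbs1 Hnet1]] [bs2 [Hbs2 Hnet2]]. exists (bs1 ++ bs2). split.
  - apply Forall_app. split.
    + exact (Forall_impl _ (fun b Hb => proj2 (HS b) (or_introl Hb)) Hbs1).
    + exact (Forall_impl _ (fun b Hb => proj2 (HS b) (or_intror Hb)) Hbs2).
  - intros a Ha. apply HS in Ha as [Ha|Ha].
    + destruct (Hnet1 a Ha) as [b [Hb Hab]]. exists b. split; [apply in_or_app; auto| exact Hab].
    + destruct (Hnet2 a Ha) as [b [Hb Hab]]. exists b. split; [apply in_or_app; auto| exact Hab].
Qed.

(* Cut [S] into [N] strips of width [eta] in the direction of [f]. *)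
Lemma has_pdist_net_strips f fs eta :
  0 < eta -> (forall S, has_pdist_net fs eta S) ->
  forall N c S, (forall a, S a -> c <= f a < c + INR N * eta) -> has_pdist_net (f :: fs) eta S.
Proof.
  intros Heta Hfs N. induction N as [|N IHN]; intros c S HS.
  - exists []. split; [constructor|]. intros a Ha. specialize (HS a Ha). simpl in HS. lra.
  - apply (has_pdist_net_union _ _ S (fun a => S a /\ f a < c + eta)
                                     (fun a => S a /\ c + eta <= f a)).
    + intros a. split.
      * intros Ha. destruct (Rlt_le_dec (f a) (c + eta)); [left|right]; split; assumption.
      * intros [[Ha _]|[Ha _]]; exact Ha.
    + apply has_pdist_net_cons; [|apply Hfs]. intros a b [Ha Ha'] [Hb Hb'].
      pose proof (HS a Ha). pose proof (HS b Hb). apply Rabs_def1; lra.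
    + apply (IHN (c + eta)). intros a [Ha Hge]. specialize (HS a Ha).
      rewrite S_INR in HS. split; lra.
Qed.

Lemma pdist_totally_bounded fs eta :
  Forall bounded_fun fs -> 0 < eta -> forall S, has_pdist_net fs eta S.
Proof.
  intros Hfs Heta. induction Hfs as [|f fs [M HM] _ IH]; intros S.
  - apply has_pdist_net_nil, Heta.
  - destruct (INR_archimed eta (2 * M) Heta) as [N HN].
    apply (has_pdist_net_strips f fs eta Heta IH N (- M)). intros a _.
    specialize (HM a). revert HM. generalize (f a). intros. minmax_lra.
Qed.

Lemma pdist_finite_net fs eta :
  Forall bounded_fun fs -> 0 < eta -> exists bs, forall a, exists b, In b bs /\ pdist fs a b < eta.
Proof.
  intros Hfs Heta. destruct (pdist_totally_bounded fs eta Hfs Heta (fun _ => True)) as [bs [_ Hnet]].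
  exists bs. intros a. exact (Hnet a I).
Qed.

Definition pdist_unif (F : (X -> R) -> Prop) (E : X * X -> Prop) : Prop :=
  exists fs d, 0 < d /\ Forall F fs /\ forall a b, pdist fs a b < d -> E (a, b).

Variable F : (X -> R) -> Prop.

Lemma pdist_unif_is_uniformity : is_uniformity (pdist_unif F).
Proof.
  split; [|split; [|split; [|split; [|split]]]].
  - exists [], 1. split; [lra| split; [constructor| auto]].
  - intros E E' [fs [d [Hd [Hfs HE]]]] HEE'. exists fs, d. auto.
  - intros E E' [fs [d [Hd [Hfs HE]]]] [gs [d' [Hd' [Hgs HE']]]].
    exists (fs ++ gs), (Rmin d d'). split; [apply Rmin_glb_lt; assumption|].
    split; [apply Forall_app; auto|]. intros a b Hab.
    rewrite pdist_app, Rmax_Rlt in Hab. destruct Hab as [H1 H2]. split.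
    + apply HE. eapply Rlt_le_trans; [exact H1| apply Rmin_l].
    + apply HE'. eapply Rlt_le_trans; [exact H2| apply Rmin_r].
  - intros E [fs [d [Hd [_ HE]]]] a. apply HE. rewrite pdist_refl. exact Hd.
  - intros E [fs [d [Hd [Hfs HE]]]]. exists fs, d. split; [exact Hd| split; [exact Hfs|]].
    intros a b Hab. apply HE. rewrite pdist_sym. exact Hab.
  - intros E [fs [d [Hd [Hfs HE]]]].
    exists (fun p => pdist fs (fst p) (snd p) < d / 2). split.
    + exists fs, (d / 2). split; [lra| split; [exact Hfs| auto]].
    + intros a b c Hab Hbc. apply HE. pose proof (pdist_triangle fs a b c). cbn in *. lra.
Qed.

Lemma unif_cont_pdist_unif f : F f -> unif_cont (pdist_unif F) f.
Proof.
  intros Hf E [e [He HE]]. exists [f], e. split; [exact He| split; [constructor; auto|]].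
  intros a b Hab. apply HE. apply Rmax_Rlt in Hab. apply Hab.
Qed.

Lemma pdist_unif_coarsest U :
  is_uniformity U -> (forall f, F f -> unif_cont U f) -> forall E, pdist_unif F E -> U E.
Proof.
  intros HU HF E [fs [d [Hd [Hfs HE]]]].
  assert (Hball : U (fun p => pdist fs (fst p) (snd p) < d)).
  { clear HE. induction Hfs as [|f fs Hf _ IH].
    - apply (unif_superset U HU _ _ (unif_top U HU)). intros p _. exact Hd.
    - apply (unif_superset U HU _ _
               (unif_inter U HU _ _ (proj1 (unif_contP U HU f) (HF f Hf) d Hd) IH)).
      intros p [H1 H2]. apply Rmax_lub_lt; assumption. }
  apply (unif_superset U HU _ _ Hball). intros [a b]. apply HE.
Qed.

Lemma unif_genE : unif_gen F = pdist_unif F.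
Proof.
  extensionality E. apply propositional_extensionality. split.
  - intros HE. apply HE; [apply pdist_unif_is_uniformity| apply unif_cont_pdist_unif].
  - intros HE U HU HF. exact (pdist_unif_coarsest U HU HF E HE).
Qed.

End Pseudometric.

Lemma list_bounded {Y : Type} (T : Y -> R) bs : exists M, forall b, In b bs -> T b <= M.
Proof.
  induction bs as [|b bs [M HM]].
  - exists 0. intros b [].
  - exists (Rmax (T b) M). intros b' [<-|Hb']; [apply Rmax_l|].
    eapply Rle_trans; [apply HM, Hb'| apply Rmax_r].
Qed.

Lemma fold_Rmin_le {Y : Type} (T : Y -> R) c bs b :
  In b bs -> fold_right (fun b m => Rmin (T b) m) c bs <= T b.
Proof.
  induction bs as [|b' bs IH]; simpl; intros Hb; [destruct Hb|].
  destruct Hb as [<-|Hb]; [apply Rmin_l|]. eapply Rle_trans; [apply Rmin_r| auto].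
Qed.

Lemma fold_Rmin_glb {Y : Type} (T : Y -> R) c bs y :
  (forall b, In b bs -> y <= T b) -> y <= c -> y <= fold_right (fun b m => Rmin (T b) m) c bs.
Proof.
  induction bs as [|b bs IH]; simpl; intros HT Hc; [exact Hc|].
  apply Rmin_glb; auto.
Qed.

Section LatticeApproximation.
Context {X : Type} (F A : (X -> R) -> Prop).
Hypothesis F_bounded : forall f, F f -> bounded_fun f.
Hypothesis F_sub_A : forall f, F f -> A f.
Hypothesis A_const : forall c, A (fun _ => c).
Hypothesis A_min : forall f g, A f -> A g -> A (fun s => Rmin (f s) (g s)).
Hypothesis A_addl : forall r f, A f -> A (fun s => r + f s).
Hypothesis A_scale : forall r f, A f -> A (fun s => r * f s).

Lemma closed_Rmax f g : A f -> A g -> A (fun s => Rmax (f s) (g s)).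
Proof.
  intros Hf Hg.
  replace (fun s => Rmax (f s) (g s)) with (fun s => -1 * Rmin (-1 * f s) (-1 * g s)).
  - apply A_scale, (A_min (fun s => -1 * f s) (fun s => -1 * g s)); apply A_scale; assumption.
  - extensionality s. generalize (f s) (g s). intros. minmax_lra.
Qed.

Lemma closed_Rabs_sub f c : A f -> A (fun s => Rabs (f s - c)).
Proof.
  intros Hf. replace (fun s => Rabs (f s - c)) with (fun s => Rmax (- c + f s) (c + -1 * f s)).
  - apply (closed_Rmax (fun s => - c + f s) (fun s => c + -1 * f s)).
    + apply A_addl, Hf.
    + apply (A_addl c (fun s => -1 * f s)), A_scale, Hf.
  - extensionality s. generalize (f s). intros. minmax_lra.
Qed.

Lemma closed_pdist fs b : Forall F fs -> A (fun a => pdist fs a b).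
Proof.
  intros Hfs. induction Hfs as [|f fs Hf _ IH]; [exact (A_const 0)|].
  apply (closed_Rmax (fun a => Rabs (f a - f b)) (fun a => pdist fs a b)); [|exact IH].
  apply closed_Rabs_sub, F_sub_A, Hf.
Qed.

Lemma closed_fold_Rmin (T : X -> X -> R) c bs :
  (forall b, A (T b)) -> A (fun a => fold_right (fun b m => Rmin (T b a) m) c bs).
Proof.
  intros HT. induction bs as [|b bs IH]; [exact (A_const c)|].
  apply (A_min (T b) (fun a => fold_right (fun b m => Rmin (T b a) m) c bs)); auto.
Qed.

Lemma unif_cont_bounded h : unif_cont (pdist_unif F) h -> bounded_fun h.
Proof.
  intros Hh.
  destruct (proj1 (unif_contP _ (pdist_unif_is_uniformity F) h) Hh 1 Rlt_0_1)
    as [fs [d [Hd [Hfs Hclose]]]].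
  destruct (pdist_finite_net fs d (Forall_impl _ F_bounded Hfs) Hd) as [bs Hnet].
  destruct (list_bounded (fun b => Rabs (h b)) bs) as [M HM].
  exists (M + 1). intros a. destruct (Hnet a) as [b [Hb Hab]].
  pose proof (HM b Hb). pose proof (Hclose a b Hab). cbn in *.
  revert H H0. generalize (h a) (h b). intros. minmax_lra.
Qed.

Lemma unif_cont_almost_lipschitz h eps :
  unif_cont (pdist_unif F) h -> 0 < eps ->
  exists fs K, Forall F fs /\ 0 < K /\ forall a b, Rabs (h a - h b) <= eps + K * pdist fs a b.
Proof.
  intros Hh Heps. destruct (unif_cont_bounded h Hh) as [M HM].
  destruct (proj1 (unif_contP _ (pdist_unif_is_uniformity F) h) Hh eps Heps)
    as [fs [d [Hd [Hfs Hclose]]]].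
  pose proof (Rabs_pos M) as HM0.
  set (K := (2 * Rabs M + 1) / d).
  assert (HKd : K * d = 2 * Rabs M + 1) by (unfold K; field; lra).
  assert (HK : 0 < K) by (unfold K; apply Rdiv_lt_0_compat; lra).
  exists fs, K. split; [exact Hfs| split; [exact HK|]]. intros a b.
  pose proof (pdist_ge0 fs a b).
  destruct (Rlt_le_dec (pdist fs a b) d) as [Hnear|Hfar].
  - specialize (Hclose a b Hnear). cbn in Hclose.
    assert (0 <= K * pdist fs a b) by (apply Rmult_le_pos; lra). lra.
  - assert (K * d <= K * pdist fs a b) by (apply Rmult_le_compat_l; lra).
    pose proof (HM a) as Ha. pose proof (HM b) as Hb.
    assert (Rabs (h a - h b) <= 2 * Rabs M).
    { revert Ha Hb. generalize (h a) (h b). intros. minmax_lra. }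
    lra.
Qed.

(* McShane-type extension from a finite net: [g a = min_b (h b + eps + K d(a, b))]. *)
Lemma lattice_approx h e :
  unif_cont (pdist_unif F) h -> 0 < e -> exists g, A g /\ forall s, Rabs (g s - h s) < e.
Proof.
  intros Hh He. set (eps := e / 4). assert (Heps : 0 < eps) by (unfold eps; lra).
  destruct (unif_cont_almost_lipschitz h eps Hh Heps) as [fs [K [Hfs [HK Hlip]]]].
  destruct (unif_cont_bounded h Hh) as [M HM].
  destruct (pdist_finite_net fs (eps / K) (Forall_impl _ F_bounded Hfs)
              (Rdiv_lt_0_compat _ _ Heps HK)) as [bs Hnet].
  set (g := fun a => fold_right (fun b m => Rmin (h b + eps + K * pdist fs a b) m) (M + eps) bs).
  exists g. split.
  - apply (closed_fold_Rmin (fun b a => h b + eps + K * pdist fs a b)). intros b.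
    apply (A_addl (h b + eps) (fun a => K * pdist fs a b)), A_scale, closed_pdist, Hfs.
  - intros s.
    assert (Hlo : h s <= g s).
    { apply (fold_Rmin_glb (fun b => h b + eps + K * pdist fs s b)).
      - intros b _. pose proof (Hlip s b) as Hsb.
        revert Hsb. generalize (h s) (h b) (K * pdist fs s b). intros. minmax_lra.
      - pose proof (HM s) as Hs. revert Hs. generalize (h s). intros. minmax_lra. }
    destruct (Hnet s) as [b [Hb Hsb]].
    assert (Hup : g s <= h b + eps + K * pdist fs s b)
      by exact (fold_Rmin_le (fun b => h b + eps + K * pdist fs s b) _ _ _ Hb).
    assert (HKd : K * pdist fs s b < eps).
    { replace eps with (K * (eps / K)) by (field; lra). apply Rmult_lt_compat_l; assumption. }
    pose proof (Hlip s b) as Hhsb.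
    revert Hlo Hup HKd Hhsb. unfold eps.
    generalize (g s) (h s) (h b) (K * pdist fs s b). intros. minmax_lra.
Qed.

End LatticeApproximation.

Section CoalgebraicLogic.
Variables (B : Type -> Type) (fmap : forall X Y : Type, (X -> Y) -> B X -> B Y).
Variables (Lam : Type) (tau : Lam -> B R -> R).

Lemma is_bisim_unif_eq (X : Type) (x : X -> B X) (L : (X * X -> Prop) -> Prop) :
  is_uniformity L -> unif_eq (Phi B fmap Lam tau X x L) L ->
  (forall V, is_uniformity V -> unif_eq (Phi B fmap Lam tau X x V) V -> unif_sqle V L) ->
  forall U, is_bisim_unif B fmap Lam tau X x U <-> unif_eq U L.
Proof.
  intros HL Hfix Hgreatest U. split.
  - intros [HU [HUfix HUgreatest]] E. split.
    + apply (HUgreatest L HL Hfix).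
    + apply (Hgreatest U HU HUfix).
  - intros HUL. apply unif_eq_eq in HUL. subst U. split; [exact HL| split; assumption].
Qed.

Variables (X : Type) (x : X -> B X).

Local Notation "⟦ phi ⟧" := (sem B fmap Lam tau X x phi).
Local Notation L := (logical_unif B fmap Lam tau X x).
Local Notation Phi := (Phi B fmap Lam tau X x).
Local Notation lift l h := (fun s : X => tau l (fmap X R h (x s))).

Hypothesis tau_bounded : forall l (k : X -> R),
  bounded_fun k -> bounded_fun (fun b : B X => tau l (fmap X R k b)).
Hypothesis tau_unif_conv : forall l (k : nat -> X -> R) (h : X -> R),
  unif_conv k h ->
  unif_conv (fun i (b : B X) => tau l (fmap X R (k i) b)) (fun b : B X => tau l (fmap X R h b)).

Lemma logical_unifE : L = pdist_unif (fun f => exists phi, f = ⟦phi⟧).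
Proof. apply unif_genE. Qed.

Lemma logical_unif_is_uniformity : is_uniformity L.
Proof. rewrite logical_unifE. apply pdist_unif_is_uniformity. Qed.

Lemma PhiE V : Phi V = pdist_unif (fun f => exists l h, unif_cont V h /\ f = lift l h).
Proof. apply unif_genE. Qed.

Lemma unif_cont_lift_Phi V l h : unif_cont V h -> unif_cont (Phi V) (lift l h).
Proof.
  intros Hh. rewrite PhiE. apply unif_cont_pdist_unif. exists l, h. auto.
Qed.

Lemma sem_bounded phi : bounded_fun ⟦phi⟧.
Proof.
  induction phi as [| p [M1 H1] q [M2 H2] | r p [M H] | r p [M H] | l p IH]; simpl.
  - exists 1. intros _. rewrite Rabs_R1. lra.
  - exists (Rmax M1 M2). intros s. specialize (H1 s). specialize (H2 s).
    revert H1 H2. generalize (⟦p⟧ s) (⟦q⟧ s). intros. minmax_lra.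
  - exists (Rabs r + M). intros s.
    eapply Rle_trans; [apply Rabs_triang|]. specialize (H s). lra.
  - exists (Rabs r * M). intros s.
    rewrite Rabs_mult. apply Rmult_le_compat_l; [apply Rabs_pos| apply H].
  - destruct (tau_bounded l _ IH) as [M H]. exists M. intros s. apply H.
Qed.

Lemma sem_unif_cont U :
  is_uniformity U -> (forall l phi, unif_cont U ⟦phi⟧ -> unif_cont U ⟦FHeart l phi⟧) ->
  forall phi, unif_cont U ⟦phi⟧.
Proof.
  intros HU Hheart phi. induction phi; simpl.
  - apply unif_cont_const, HU.
  - apply unif_cont_min; assumption.
  - apply unif_cont_addl; assumption.
  - apply unif_cont_scale; assumption.
  - apply Hheart, IHphi.
Qed.

Lemma sem_unif_dense h :
  unif_cont L h -> exists k : nat -> X -> R, (forall n, exists phi, k n = ⟦phi⟧) /\ unif_conv k h.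
Proof.
  rewrite logical_unifE. intros Hh.
  apply (unif_conv_approx_seq (fun g => exists phi, g = ⟦phi⟧)). intros e He.
  apply (lattice_approx (fun f => exists phi, f = ⟦phi⟧) (fun f => exists phi, f = ⟦phi⟧));
    try assumption.
  - intros f [phi ->]. apply sem_bounded.
  - auto.
  - intros c. exists (FAdd (c - 1) FOne). extensionality s. simpl. ring.
  - intros f g [p ->] [q ->]. exists (FMin p q). reflexivity.
  - intros r f [p ->]. exists (FAdd r p). reflexivity.
  - intros r f [p ->]. exists (FMul r p). reflexivity.
Qed.

Lemma unif_cont_lift_logical l h : unif_cont L h -> unif_cont L (lift l h).
Proof.
  intros Hh. destruct (sem_unif_dense h Hh) as [k [Hk Hkh]].
  apply (unif_cont_unif_limit L logical_unif_is_uniformity (fun n => lift l (k n))).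
  - intros n. destruct (Hk n) as [phi ->]. rewrite logical_unifE.
    apply unif_cont_pdist_unif. exists (FHeart l phi). reflexivity.
  - apply (unif_conv_comp (fun i b => tau l (fmap X R (k i) b)) (fun b => tau l (fmap X R h b)) x).
    apply tau_unif_conv, Hkh.
Qed.

Lemma logical_unif_fixpoint : unif_eq (Phi L) L.
Proof.
  assert (HPhiL : is_uniformity (Phi L)) by (rewrite PhiE; apply pdist_unif_is_uniformity).
  intros E. split.
  - rewrite PhiE. apply pdist_unif_coarsest; [exact logical_unif_is_uniformity|].
    intros f [l [h [Hh ->]]]. apply unif_cont_lift_logical, Hh.
  - intros HE. rewrite logical_unifE in HE. revert E HE.
    apply pdist_unif_coarsest; [exact HPhiL|]. intros f [phi ->].
    apply sem_unif_cont; [exact HPhiL|]. intros l p _.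
    apply unif_cont_lift_Phi. rewrite logical_unifE. apply unif_cont_pdist_unif. eauto.
Qed.

Lemma logical_unif_coarsest_fixpoint V :
  is_uniformity V -> unif_eq (Phi V) V -> unif_sqle V L.
Proof.
  intros HV Hfix E HE. rewrite logical_unifE in HE. revert E HE.
  apply pdist_unif_coarsest; [exact HV|]. intros f [phi ->].
  apply sem_unif_cont; [exact HV|]. intros l p Hp E HE.
  apply (proj1 (Hfix _)). exact (unif_cont_lift_Phi V l _ Hp E HE).
Qed.

End CoalgebraicLogic.

Theorem mainTheorem13
  (B : Type -> Type) (fmap : forall X Y : Type, (X -> Y) -> B X -> B Y)
  (fmap_id : forall (X : Type) (b : B X), fmap X X (fun a => a) b = b)
  (fmap_comp : forall (X Y Z : Type) (f : X -> Y) (g : Y -> Z) (b : B X),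
      fmap X Z (fun a => g (f a)) b = fmap Y Z g (fmap X Y f b))
  (Lam : Type) (tau : Lam -> B R -> R)
  (hbounded : forall (Y : Type) (l : Lam) (k : Y -> R),
      bounded_fun k -> bounded_fun (fun b : B Y => tau l (fmap Y R k b)))
  (hconv : forall (Y : Type) (l : Lam) (k : nat -> Y -> R) (h : Y -> R),
      unif_conv k h ->
      unif_conv (fun i (b : B Y) => tau l (fmap Y R (k i) b))
                (fun b : B Y => tau l (fmap Y R h b))) :
  forall (X : Type) (x : X -> B X) (U : (X * X -> Prop) -> Prop),
    is_bisim_unif B fmap Lam tau X x U <->
    unif_eq U (logical_unif B fmap Lam tau X x).
Proof.
  intros X x. apply is_bisim_unif_eq.
  - apply logical_unif_is_uniformity.
  - exact (logical_unif_fixpoint B fmap Lam tau X x (hbounded X) (hconv X)).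
  - apply logical_unif_coarsest_fixpoint.
Qed.
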